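(* Let $x_i,x_j\in V$ be distinct vertices with $x_i$ a potential parent of $x_j$. Then $x_i,x_j$ are not in PP1 relation if and only if $x_i\not\perp x_j$.
   Context: Let $G=(V,E)$ be a DAG on $V=\{x_1,\dots,x_d\}$ whose vertices are random variables generated by a nonlinear additive noise model $x_i=f_i(\mathrm{Pa}(x_i))+\varepsilon_i$ with jointly independent noise terms, assumed identifiable in the sense of Peters et al. (2014) for nonlinear ANMs, and with distribution Markov and faithful to $G$. $\mathrm{Pa}$, $\mathrm{De}$ denote parents and descendants. A path is active (relative to the empty set) if it contains no collider (a vertex with both adjacent path edges pointing into it). A potential parent of $x_j$ is a vertex $x_i\neq x_j$ with $x_i\notin\mathrm{De}(x_j)$. With $C=\mathrm{Pa}(x_j)\setminus\{x_i\}$, the pair is in PP1 relation if $x_i\notin\mathrm{Pa}(x_j)$ and there is no active path between $x_i$ and any vertex of $C$. $\perp$ denotes statistical independence. *)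

From mathcomp Require Import all_boot all_order all_algebra.
From mathcomp Require Import all_classical all_reals.
From mathcomp Require Import measure lebesgue_measure probability.
Set Implicit Arguments.
Unset Strict Implicit.
Unset Printing Implicit Defensive.
Import Order.TTheory GRing.Theory Num.Theory.
Local Open Scope classical_set_scope.
Local Open Scope ring_scope.

Definition is_dag n (E : rel 'I_n) : Prop :=
  forall u v, E u v -> ~~ connect E v u.

Definition Pa n (E : rel 'I_n) (v : 'I_n) : {set 'I_n} := [set u | E u v].

(* descendants of v (reachable by a nonempty directed path; for a DAG
   this excludes v itself) *)
Definition De n (E : rel 'I_n) (v : 'I_n) : {set 'I_n} :=
  [set w | [exists u, E v u && connect E u w]].

Definition adj n (E : rel 'I_n) : rel 'I_n := fun u v => E u v || E v u.

Definition is_path_between n (E : rel 'I_n) (a b : 'I_n) (p : seq 'I_n) :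
  Prop :=
  [/\ path (adj E) a p, last a p = b & uniq (a :: p)].

Definition collider_free n (E : rel 'I_n) (s : seq 'I_n) : Prop :=
  forall (x0 : 'I_n) (k : nat), (k.+2 < size s)%N ->
    ~~ (E (nth x0 s k) (nth x0 s k.+1) && E (nth x0 s k.+2) (nth x0 s k.+1)).

(* there is an active path (relative to the empty set) between a and b *)
Definition active_path n (E : rel 'I_n) (a b : 'I_n) : Prop :=
  exists p : seq 'I_n, is_path_between E a b p /\ collider_free E (a :: p).

Definition potential_parent n (E : rel 'I_n) (i j : 'I_n) : Prop :=
  i != j /\ i \notin De E j.

Definition PP1 n (E : rel 'I_n) (i j : 'I_n) : Prop :=
  i \notin Pa E j /\
  forall c, c \in Pa E j :\ i -> ~ active_path E i c.

Definition indep2 d (T : measurableType d) (R : realType)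
  (P : probability T R) (X Y : T -> R) : Prop :=
  forall A B : set R, measurable A -> measurable B ->
    P (X @^-1` A `&` Y @^-1` B) = (P (X @^-1` A) * P (Y @^-1` B))%E.

Definition mutually_indep d (T : measurableType d) (R : realType)
  (P : probability T R) n (Z : 'I_n -> T -> R) : Prop :=
  forall (S : {set 'I_n}) (A : 'I_n -> set R),
    (forall k, measurable (A k)) ->
    P [set w | forall k, k \in S -> A k (Z k w)] =
    (\prod_(k in S) P (Z k @^-1` A k))%E.

Definition additive_noise_model d (T : measurableType d) (R : realType)
  (P : probability T R) n (E : rel 'I_n)
  (X eps : 'I_n -> T -> R) (f : 'I_n -> ('I_n -> R) -> R) : Prop :=
  [/\ forall k (v w : 'I_n -> R),
        (forall u, u \in Pa E k -> v u = w u) -> f k v = f k w,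
      forall k w, X k w = f k (fun u => X u w) + eps k w
    & mutually_indep P eps].

(* Markov property (consequence used here: global Markov with empty
   conditioning set, for pairs of vertices) *)
Definition markov_pairs d (T : measurableType d) (R : realType)
  (P : probability T R) n (E : rel 'I_n) (X : 'I_n -> T -> R) : Prop :=
  forall a b, a != b -> ~ active_path E a b -> indep2 P (X a) (X b).

(* faithfulness (empty conditioning set, pairs of vertices) *)
Definition faithful_pairs d (T : measurableType d) (R : realType)
  (P : probability T R) n (E : rel 'I_n) (X : 'I_n -> T -> R) : Prop :=
  forall a b, a != b -> indep2 P (X a) (X b) -> ~ active_path E a b.

From mathcomp Require Import all_boot all_order all_algebra.
From mathcomp Require Import all_classical all_reals.
From mathcomp Require Import measure lebesgue_measure probability.
From mathcomp Require Import zify.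

(* If x_i and x_j are independent, faithfulness forbids an active path between
   them. Extending an active path from x_i to a parent c of x_j by the edge
   c -> x_j keeps it active, since acyclicity rules out a collider at c; hence
   PP1 holds. Conversely, assume PP1 and take an active path from x_j to x_i.
   A collider-free path whose first edge leaves x_j is directed, which would
   make x_i a descendant of x_j; so the path starts with an edge from a parent
   c <> x_i, and its remainder is an active path from c to x_i, contradicting
   PP1. The Markov property then gives independence. *)

Set Implicit Arguments.
Unset Strict Implicit.
Unset Printing Implicit Defensive.

Section ActivePaths.
Variables (n : nat) (E : rel 'I_n).

Lemma adjC : symmetric (adj E).
Proof. by move=> u v; rewrite /adj orbC. Qed.

Lemma collider_free_small (s : seq 'I_n) : (size s <= 2)%N -> collider_free E s.
Proof. by move=> s_small x0 k; rewrite ltnNge (leq_trans s_small). Qed.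

Lemma collider_free_behead (x : 'I_n) (s : seq 'I_n) :
  collider_free E (x :: s) -> collider_free E s.
Proof. by move=> cf x0 k k_lt; apply: (cf x0 k.+1). Qed.

Lemma collider_free_catr (s1 s2 : seq 'I_n) :
  collider_free E (s1 ++ s2) -> collider_free E s2.
Proof. by elim: s1 => [|x s1 IH] // /collider_free_behead. Qed.

Lemma collider_free_cons3 (x y z : 'I_n) (s : seq 'I_n) :
  collider_free E [:: x, y, z & s] <->
  ~~ (E x y && E z y) /\ collider_free E [:: y, z & s].
Proof.
split=> [cf | [no_collider cf] x0 [|k] k_lt //]; last exact: (cf x0 k).
by split; [exact: (cf x 0) | exact: collider_free_behead cf].
Qed.

Lemma collider_free_rev (s : seq 'I_n) :
  collider_free E (rev s) -> collider_free E s.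
Proof.
move=> cf x0 k k_lt; set m := (size s - k.+3)%N.
have := cf x0 m; rewrite size_rev !nth_rev ?size_rev; try lia.
have -> : (size s - m.+1 = k.+2)%N by lia.
have -> : (size s - m.+2 = k.+1)%N by lia.
have -> : (size s - m.+3 = k)%N by lia.
by rewrite andbC; apply; lia.
Qed.

Lemma active_path_refl (a : 'I_n) : active_path E a a.
Proof. by exists [::]; split; [split | exact: collider_free_small]. Qed.

Lemma active_path_sym (a b : 'I_n) : active_path E a b -> active_path E b a.
Proof.
case=> p [[ab_path <- a_p_uniq] cf]; exists (rev (belast a p)).
have rev_ap : last a p :: rev (belast a p) = rev (a :: p).
  by rewrite [a :: p]lastI rev_rcons.
split; [split|].
- by rewrite rev_path (eq_path (fun u v => adjC v u)).
- by rewrite -[last _ _](last_cons a) rev_ap rev_cons last_rcons.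
- by rewrite rev_ap rev_uniq.
- by apply: collider_free_rev; rewrite rev_ap revK.
Qed.

Lemma active_path_from_inner (a b c : 'I_n) (p : seq 'I_n) :
  is_path_between E a b p -> collider_free E (a :: p) -> c \in p ->
  active_path E c b.
Proof.
move=> [ab_path ab_last ab_uniq] cf /splitPr ab_split.
case: ab_split ab_path ab_last ab_uniq cf => p1 p2.
rewrite cat_path last_cat -cat_cons cat_uniq.
move=> /andP [_ /andP [_ c_path]] cb_last /and3P [_ _ cb_uniq] cf.
exists p2; split; [split|] => //.
exact: (@collider_free_catr (a :: p1)).
Qed.

Lemma collider_free_directed (x y : 'I_n) (s : seq 'I_n) :
  E x y -> path (adj E) y s -> collider_free E [:: x, y & s] ->
  path E x (y :: s).
Proof.
elim: s x y => [|z s IH] x y Exy; first by rewrite /= Exy.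
rewrite /= /adj => /andP [/orP yz_adj z_path] /collider_free_cons3 [no_collider cf].
have Eyz : E y z by case: yz_adj => // Ezy; move: no_collider; rewrite Exy Ezy.
by rewrite Exy; exact: IH.
Qed.

(* An active path leaving [j] either starts with a parent of [j] or, having
   no collider, is directed away from [j]. *)
Lemma active_path_via_parent (i j : 'I_n) :
  active_path E j i -> j != i -> i \notin De E j -> i \notin Pa E j ->
  exists2 c, c \in Pa E j :\ i & active_path E c i.
Proof.
case=> [[|v r] [[/= ji_path ji_last ji_uniq] cf]] j_ne_i i_notDe i_notPa.
  by move: j_ne_i; rewrite ji_last eqxx.
move: ji_path; rewrite /adj => /andP [/orP [Ejv | Evj] vi_path].
- case/negP: i_notDe; rewrite inE; apply/existsP; exists v; rewrite Ejv -ji_last /=.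
  have /andP [_ vi_directed] : path E j (v :: r) by apply: collider_free_directed.
  by apply: (path_connect vi_directed); rewrite mem_last.
- exists v.
    rewrite !inE Evj andbT; apply: contraNneq i_notPa => <-.
    by rewrite inE.
  exists r; split; [split|] => //.
  + by case/andP: ji_uniq.
  + exact: collider_free_behead cf.
Qed.

Hypothesis E_dag : is_dag E.

Lemma dag_asym (u v : 'I_n) : E u v -> ~~ E v u.
Proof. by move=> /E_dag; apply: contra; exact: connect1. Qed.

Lemma active_path_cons (a b c : 'I_n) :
  E c b -> active_path E c a -> active_path E b a.
Proof.
move=> Ecb [p [[ca_path ca_last ca_uniq] cf]].
case: (boolP (b \in c :: p)) => [|b_notin].
  rewrite inE => /orP [/eqP b_eq_c | b_in_p].
    by move: Ecb (dag_asym Ecb); rewrite b_eq_c => ->.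
  exact: active_path_from_inner (And3 ca_path ca_last ca_uniq) cf b_in_p.
exists (c :: p); split; [split|] => //=.
- by rewrite /adj Ecb orbT ca_path.
- by rewrite b_notin.
- case: p {ca_path ca_last ca_uniq b_notin} cf => [|z p] cf.
    exact: collider_free_small.
  by apply/collider_free_cons3; rewrite (negbTE (dag_asym Ecb)).
Qed.

Lemma active_path_parent (a b c : 'I_n) :
  E c b -> active_path E a c -> active_path E a b.
Proof.
by move=> Ecb /active_path_sym /(active_path_cons Ecb) /active_path_sym.
Qed.

End ActivePaths.

Theorem lemma9 (R : realType) (d : measure_display) (T : measurableType d)
  (P : probability T R) (n : nat) (E : rel 'I_n)
  (X eps : 'I_n -> {RV P >-> R}) (f : 'I_n -> ('I_n -> R) -> R) :
  is_dag E ->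
  additive_noise_model P E (fun k => X k : T -> R) (fun k => eps k : T -> R) f ->
  markov_pairs P E (fun k => X k : T -> R) ->
  faithful_pairs P E (fun k => X k : T -> R) ->
  forall i j : 'I_n, potential_parent E i j ->
    (~ PP1 E i j <-> ~ indep2 P (X i) (X j)).
Proof.
move=> E_dag _ markov faithful i j [i_ne_j i_notDe]; split.
- move=> not_PP1 indep; apply: not_PP1.
  have no_ij_path := faithful i j i_ne_j indep.
  split=> [|c]; rewrite !inE.
  + apply: contra_notN no_ij_path => Eij.
    by apply: (active_path_parent E_dag Eij); exact: active_path_refl.
  + by case/andP=> _ Ecj /(active_path_parent E_dag Ecj).
- move=> dependent [i_notPa no_parent_path]; apply: dependent.
  apply: (markov i j i_ne_j) => /active_path_sym ji_path.
  have j_ne_i : j != i by rewrite eq_sym.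
  have [c c_parent ci_path] := active_path_via_parent ji_path j_ne_i i_notDe i_notPa.
  by apply: (no_parent_path c c_parent); apply: active_path_sym.
Qed.
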